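(* Let $\mathbb{F}$ be a feature space and let $\theta$ be a function that aggregates any finite nonempty collection of elements of $\mathbb{F}$ into a single element of $\mathbb{F}$. Let $\mathcal{H}$ be a hierarchy (rooted tree) of malware binaries in which every non-leaf node $E_j$ (an exemplar) has features $F_j\in\mathbb{F}$ given by applying $\theta$ to the features of its children. Let $E_i$ be an exemplar of $\mathcal{H}$ whose descendants at depth $d_r$, $\mathbb{C}^{d_r}_i$, are re-clustered: the nodes strictly between $E_i$ and $\mathbb{C}^{d_r}_i$ are discarded and replaced by a sub-hierarchy $\mathcal{H}'$ with root $E_i$ and leaves exactly $\mathbb{C}^{d_r}_i$ (of arbitrary depth), in which the re-clustering algorithm generates the features of every exemplar (including $E_i$) by applying $\theta$ to the features of its children. Let $F_i$ be the features of $E_i$ before re-clustering and $F_i'$ its features after re-clustering. If $\theta$ is a transitive feature function (on the hierarchy both before and after the re-clustering), then $F_i = F_i'$.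
   Context: For an exemplar $E_i$ of a hierarchy, $\mathbb{C}^n_i$ denotes the set of descendants of $E_i$ at depth $n$ below $E_i$ (so $\mathbb{C}^1_i$ is its set of children), and $F_j$ denotes the features of node $E_j$ (binaries at the leaves have given features in $\mathbb{F}$). A function $\theta$ is called transitive on a hierarchy $\mathcal{H}$ if for every exemplar $E_i$ and all depths $n,m$, $\theta(F_{1,n},\dots,F_{k,n})=\theta(F_{1,m},\dots,F_{j,m})$, where $E_{1,n},\dots,E_{k,n}$ are the elements of $\mathbb{C}^n_i$ and $E_{1,m},\dots,E_{j,m}$ are the elements of $\mathbb{C}^m_i$; i.e., applying $\theta$ to the features of an exemplar's descendants at any depth gives the same result. *)

From mathcomp Require Import all_boot.
From Stdlib Require Export Permutation.
Set Implicit Arguments. Unset Strict Implicit. Unset Printing Implicit Defensive.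

(* Rooted (rose) trees with labelled leaves. A hierarchy of malware binaries
   is a [tree F]: leaves are binaries carrying their given features in F,
   internal nodes are exemplars. *)
Inductive tree (A : Type) : Type :=
| Leaf of A
| Node of seq (tree A).
Arguments Leaf {A} _.
Arguments Node {A} _.

Section Trees.
Variable A : Type.

Fixpoint wf (t : tree A) : bool :=
  match t with
  | Leaf _ => true
  | Node cs => (0 < size cs) && all wf cs
  end.

Fixpoint desc (n : nat) (t : tree A) : seq (tree A) :=
  match n with
  | 0 => [:: t]
  | n'.+1 => match t with
             | Leaf _ => [::]
             | Node cs => flatten (map (desc n') cs)
             end
  end.

Fixpoint subtrees (t : tree A) : seq (tree A) :=
  t :: match t with
       | Leaf _ => [::]
       | Node cs => flatten (map subtrees cs)
       end.

Definition is_node (t : tree A) : bool :=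
  if t is Node _ then true else false.

Fixpoint fringe (t : tree A) : seq A :=
  match t with
  | Leaf a => [:: a]
  | Node cs => flatten (map fringe cs)
  end.

Fixpoint uniform_depth (D : nat) (t : tree A) : bool :=
  match D, t with
  | 0, Leaf _ => true
  | D'.+1, Node cs => all (uniform_depth D') cs
  | _, _ => false
  end.

(* one-hole contexts: the position of a node inside a hierarchy *)
Inductive ctx : Type :=
| Hole
| Frame of seq (tree A) & ctx & seq (tree A).

Fixpoint plug (c : ctx) (t : tree A) : tree A :=
  match c with
  | Hole => t
  | Frame l c' r => Node (l ++ plug c' t :: r)
  end.
End Trees.

Arguments Hole {A}.

(* grafting: a skeleton whose leaves are (preserved) subtrees *)
Fixpoint graft (A : Type) (s : tree (tree A)) : tree A :=
  match s with
  | Leaf t => t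
  | Node ss => Node (map (@graft A) ss)
  end.

Section Features.
Variables (F : Type) (theta : seq F -> F).

Fixpoint feat (t : tree F) : F :=
  match t with
  | Leaf f => f
  | Node cs => theta (map feat cs)
  end.

Definition transitive_on (H : tree F) : Prop :=
  forall Ei, List.In Ei (subtrees H) -> is_node Ei ->
  forall n m, 0 < n -> 0 < m -> desc n Ei <> [::] -> desc m Ei <> [::] ->
  theta (map feat (desc n Ei)) = theta (map feat (desc m Ei)).
End Features.

From mathcomp Require Import all_boot.
Set Implicit Arguments.
Unset Strict Implicit.

(* By transitivity, the features of an exemplar are theta applied to its
   descendants at any depth. Before re-clustering this gives
   F_i = theta(C^dr_i); after it, F_i' = theta(leaves of H'), the leaves of H'
   all lying at the common depth D. The two collections agree up to order, and
   theta is order-independent. *)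

Lemma desc1_Node (A : Type) (cs : seq (tree A)) : desc 1 (Node cs) = cs.
Proof. exact: flatten_seq1. Qed.

Lemma desc_graft (A : Type) (D : nat) (s : tree (tree A)) :
  uniform_depth D s -> desc D (graft s) = fringe s.
Proof.
elim: D s => [|D IH] [t|ss] //=.
by elim: ss => //= x ss IHss /andP[/IH-> /IHss->].
Qed.

Lemma fringe_neq0 (A : Type) (D : nat) (s : tree A) :
  uniform_depth D s -> wf s -> fringe s <> [::].
Proof.
elim: D s => [|D IH] [a|[|x ss]] //= /andP[x_D _] /andP[wf_x _].
by case: (fringe x) (IH x x_D wf_x).
Qed.

Lemma In_subtrees_flatten (A : Type) (x u : tree A) (l : seq (tree A)) :
  List.In x (subtrees u) -> List.In u l ->
  List.In x (flatten (map (@subtrees A) l)).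
Proof.
move=> x_u; elim: l => //= a l IH [->|u_l]; apply: List.in_or_app; first by left.
by right; apply: IH.
Qed.

Lemma In_subtrees_plug (A : Type) (c : ctx A) (t : tree A) :
  List.In t (subtrees (plug c t)).
Proof.
elim: c => [|l c IH r] /=; first by case: t => *; left.
right; apply: In_subtrees_flatten IH _.
by apply: List.in_or_app; right; left.
Qed.

Lemma feat_desc (F : Type) (theta : seq F -> F) (H : tree F)
    (cs : seq (tree F)) (n : nat) :
  transitive_on theta H -> List.In (Node cs) (subtrees H) ->
  0 < n -> desc n (Node cs) <> [::] ->
  feat theta (Node cs) = theta (map (feat theta) (desc n (Node cs))).
Proof.
move=> trans_H cs_H n_gt0 desc_n.
have cs_neq0 : cs <> [::] by move=> cs0; apply: desc_n; rewrite cs0; case: n n_gt0.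
rewrite /= -{1}(desc1_Node cs).
by apply: trans_H => //; rewrite desc1_Node.
Qed.

Theorem theorem1 (F : Type) (theta : seq F -> F)
  (* theta aggregates a (finite, unordered) collection: order-independent *)
  (theta_coll : forall s t : seq F, Permutation s t -> theta s = theta t)
  (C : ctx F) (cs : seq (tree F)) (dr D : nat) (sk : seq (tree (tree F))) :
  wf (plug C (Node cs)) ->
  0 < dr ->
  (* new sub-hierarchy H' : skeleton with root E_i, nonempty exemplars,
     leaves (all at common depth D) exactly the old C^dr_i *)
  wf (Node sk) ->
  uniform_depth D (Node sk) ->
  Permutation (fringe (Node sk)) (desc dr (Node cs)) ->
  transitive_on theta (plug C (Node cs)) ->
  transitive_on theta (plug C (graft (Node sk))) ->
  feat theta (Node cs) = feat theta (graft (Node sk)).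
Proof.
move=> _ dr_gt0 wf_sk sk_D perm_sk trans_old trans_new.
have fringe_sk := fringe_neq0 sk_D wf_sk.
have D_gt0 : 0 < D by move: sk_D; case: D.
have desc_dr : desc dr (Node cs) <> [::].
  by move=> desc0; apply/fringe_sk/Permutation_nil/Permutation_sym; rewrite -desc0.
rewrite (feat_desc trans_old (In_subtrees_plug _ _) dr_gt0 desc_dr).
rewrite [RHS](feat_desc trans_new (In_subtrees_plug _ _) D_gt0) (desc_graft sk_D) //.
by apply/esym/theta_coll/Permutation_map.
Qed.
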